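(* Let $(\mathbb S,+,\cdot)$ be an S-Field, let $s\in\mathbb S$ and $m,n\in\mathbb S_0$ with $m\neq 0$. Then $n\cdot\left(\frac{s}{m}\right)=\frac{n\cdot s}{m}$.
   Context: An S-Structure is a triple $(\mathbb S,+,\cdot)$ where $\mathbb S$ is a set and $+,\cdot$ are binary operations on $\mathbb S$ such that: $(\mathbb S,+)$ is a commutative group with identity $0$ (the inverse of $s$ is written $-s$, and $s-t:=s+(-t)$); $\mathbb S$ is closed under $\cdot$; and there exists $s\in\mathbb S$ with $0\cdot s\neq 0$ or $s\cdot 0\neq 0$. Multiplication binds tighter than addition. The structures considered come with a distinguished element of $\mathbb S$ denoted $1$. It is Commutative if $s\cdot t=t\cdot s$ for all $s,t$. For a Commutative S-Structure and $\alpha\in\mathbb S$, put $\mathbb S_\alpha=\{s\in\mathbb S:0\cdot s=s\cdot 0=\alpha\}$ and $\Lambda=\{\alpha\in\mathbb S:\mathbb S_\alpha\neq\emptyset\}$. Wheel Distributive: $s\cdot(t+r)+(s\cdot 0)=(s\cdot t)+(s\cdot r)$ for all $s,t,r\in\mathbb S$. S-Associative: for all $m,n\in\mathbb S_0$ and $s\in\mathbb S$, $m\cdot(n\cdot s)=(m\cdot n)\cdot s-([(m-1)\cdot(n-1)]\cdot(0\cdot s))$. Base: if $\mathbb S_0\neq\emptyset$ and $\alpha\in\Lambda$, $q\in\mathbb S_\alpha$ is a Base for $\mathbb S_\alpha$ if $q+\beta\in\mathbb S_\alpha$ for all $\beta\in\mathbb S_0$ and every $s\in\mathbb S_\alpha$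 equals $q+\beta$ for some $\beta\in\mathbb S_0$. Coordinated: $\mathbb S_0\neq\emptyset$ and every $\mathbb S_\alpha$ with $\alpha\in\Lambda$ has a Base. Standard Bases: a Coordinated Commutative S-Structure has Standard Bases if there is a specified element $q_0(1)\in\mathbb S_1$ which is a Base for $\mathbb S_1$, and for every $\alpha\in\Lambda$ the element $q_0(\alpha):=\alpha\cdot(q_0(1)+1)-1$ lies in $\mathbb S_\alpha$ and is a Base for $\mathbb S_\alpha$. An Essential S-Structure is an S-Structure that is Commutative, Wheel Distributive, S-Associative, has Standard Bases (in particular is Coordinated), satisfies $0,1\in\mathbb S_0$, and satisfies $\mathbb S_0=\{1\cdot x:x\in\mathbb S_0\}$. A Unity is an element $e\in\Lambda$ with $e\cdot s=s\cdot e=s$ for all $s\in\mathbb S$. Scalar Inverses: the structure has a Unity $e$ and for every $x\in\mathbb S_0$ with $x\neq 0$ there is $x^{-1}\in\mathbb S_0$ with $x\cdot x^{-1}=x^{-1}\cdot x=e$. An S-Ring is an Essential S-Structure with a Unity; an S-Field is an S-Ring with Scalar Inverses. Division By Scalars: for $s\in\mathbb S$ and $m\in\mathbb S_0$, $\frac{s}{m}$ denotes an element $q\in\mathbb S$ such that $s=m\cdot q=q\cdot m$. *)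

Record sops := SOps {
  car : Type;
  sadd : car -> car -> car;
  sopp : car -> car;
  szero : car;
  smul : car -> car -> car;
  sone : car;
  sq01 : car   (* the specified element q_0(1) *)
}.

Section SDefs.
Variable S : sops.
Local Notation T := (car S).
Local Notation "a + b" := (sadd S a b).
Local Notation "- a" := (sopp S a).
Local Notation "a - b" := (sadd S a (sopp S b)).
Local Notation "a * b" := (smul S a b).
Local Notation "0" := (szero S).
Local Notation "1" := (sone S).

(** (S,+) commutative group with identity 0 and inverse -; closure under
    multiplication is automatic; some s has 0*s <> 0 or s*0 <> 0. *)
Definition is_SStructure : Prop :=
  (forall a b c : T, a + (b + c) = (a + b) + c) /\
  (forall a b : T, a + b = b + a) /\
  (forall a : T, a + 0 = a) /\
  (forall a : T, a + (- a) = 0) /\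
  (exists s : T, 0 * s <> 0 \/ s * 0 <> 0).

Definition Commutative : Prop := forall s t : T, s * t = t * s.

Definition inS (alpha s : T) : Prop := 0 * s = alpha /\ s * 0 = alpha.

Definition inLambda (alpha : T) : Prop := exists s, inS alpha s.

Definition WheelDistributive : Prop :=
  forall s t r : T, s * (t + r) + (s * 0) = (s * t) + (s * r).

Definition SAssociative : Prop :=
  forall m n s : T, inS 0 m -> inS 0 n ->
    m * (n * s) = (m * n) * s - (((m - 1) * (n - 1)) * (0 * s)).

Definition IsBase (alpha q : T) : Prop :=
  inS alpha q /\
  (forall beta, inS 0 beta -> inS alpha (q + beta)) /\
  (forall s, inS alpha s -> exists beta, inS 0 beta /\ s = q + beta).

Definition Coordinated : Prop :=
  (exists x, inS 0 x) /\ (forall alpha, inLambda alpha -> exists q, IsBase alpha q).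

Definition q0 (alpha : T) : T := alpha * (sq01 S + 1) - 1.

Definition StandardBases : Prop :=
  Coordinated /\ Commutative /\
  inS 1 (sq01 S) /\ IsBase 1 (sq01 S) /\
  (forall alpha, inLambda alpha -> inS alpha (q0 alpha) /\ IsBase alpha (q0 alpha)).

Definition is_Essential : Prop :=
  is_SStructure /\ Commutative /\ WheelDistributive /\ SAssociative /\
  StandardBases /\ Coordinated /\ inS 0 0 /\ inS 0 1 /\
  (forall y, inS 0 y <-> exists x, inS 0 x /\ y = 1 * x).

Definition IsUnity (e : T) : Prop :=
  inLambda e /\ (forall s, e * s = s /\ s * e = s).

Definition ScalarInverses : Prop :=
  exists e, IsUnity e /\
    (forall x, inS 0 x -> x <> 0 ->
       exists y, inS 0 y /\ x * y = e /\ y * x = e).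

Definition is_SRing : Prop := is_Essential /\ exists e, IsUnity e.

Definition is_SField : Prop := is_SRing /\ ScalarInverses.

(** q is (a value of) s/m : s = m*q = q*m *)
Definition IsDivScalar (s m q : T) : Prop := s = m * q /\ s = q * m.

End SDefs.


(* Call [x] a scalar when [0 * x = 0], i.e. [x] lies in S_0.  The key fact is
   [0 * (0 * y) = 0]: every [0 * y] is a scalar, so S-associativity is honest
   associativity on it.  Hence an invertible scalar [m], with inverse [i],
   acts injectively: [z] is recovered from [m * z] as
   [i * (m * z) + (i - 1) * (m - 1) * (0 * z)], and [0 * z] as
   [i * (0 * (m * z))].  Scalars commute past each other, so
   [m * (n * q) = n * (m * q) = n * s = m * q'], whence [n * q = q']. *)

Section SStructure.

Variable S : sops.
Local Notation T := (car S).
Local Notation "a + b" := (sadd S a b).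
Local Notation "- a" := (sopp S a).
Local Notation "a - b" := (sadd S a (sopp S b)).
Local Notation "a * b" := (smul S a b).
Local Notation "0" := (szero S).
Local Notation "1" := (sone S).

Hypothesis addA : forall a b c : T, a + (b + c) = (a + b) + c.
Hypothesis addC : forall a b : T, a + b = b + a.
Hypothesis addr0 : forall a : T, a + 0 = a.
Hypothesis addrN : forall a : T, a - a = 0.

Lemma add0r a : 0 + a = a.
Proof. now rewrite addC, addr0. Qed.

Lemma addNr a : - a + a = 0.
Proof. now rewrite addC, addrN. Qed.

Lemma addrI a b c : a + b = a + c -> b = c.
Proof.
  intros H.
  now rewrite <- (add0r b), <- (add0r c), <- (addNr a), <- !addA, H.
Qed.

Lemma oppr_unique a b : a + b = 0 -> b = - a.
Proof. intros H. apply (addrI a). now rewrite H, addrN. Qed.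

Lemma opprK a : - - a = a.
Proof. symmetry. apply oppr_unique, addNr. Qed.

Lemma oppr0 : - 0 = 0.
Proof. symmetry. apply oppr_unique, addr0. Qed.

Lemma opprD a b : - (a + b) = - a + - b.
Proof.
  symmetry. apply oppr_unique.
  now rewrite (addC (- a)), addA, <- (addA a b), addrN, addr0, addrN.
Qed.

Lemma subrK a b : a - b + b = a.
Proof. now rewrite <- addA, addNr, addr0. Qed.

Lemma subKr a b : a - (a - b) = b.
Proof. now rewrite opprD, opprK, addA, addrN, add0r. Qed.

Lemma subr_swap a b c : a = b - c -> c = b - a.
Proof. intros ->. now rewrite subKr. Qed.

Hypothesis mulC : Commutative S.
Hypothesis wheel_distr : WheelDistributive S.
Hypothesis s_assoc : SAssociative S.
Hypothesis mul00 : 0 * 0 = 0.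
Hypothesis mul01 : 0 * 1 = 0.

Lemma scalar_inS0 x : 0 * x = 0 -> inS S 0 x.
Proof. intros Hx. split; [exact Hx | now rewrite mulC]. Qed.

Lemma scalar_mulrD x a b : 0 * x = 0 -> x * (a + b) = x * a + x * b.
Proof. intros Hx. now rewrite <- wheel_distr, (mulC x 0), Hx, addr0. Qed.

Lemma scalar_mulrN x a : 0 * x = 0 -> x * (- a) = - (x * a).
Proof.
  intros Hx. apply oppr_unique.
  now rewrite <- (scalar_mulrD x a (- a) Hx), addrN, mulC.
Qed.

Lemma scalarD a b : 0 * a = 0 -> 0 * b = 0 -> 0 * (a + b) = 0.
Proof. intros Ha Hb. now rewrite (scalar_mulrD 0 a b mul00), Ha, Hb, addr0. Qed.

Lemma scalarN a : 0 * a = 0 -> 0 * (- a) = 0.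
Proof. intros Ha. now rewrite (scalar_mulrN 0 a mul00), Ha, oppr0. Qed.

Lemma scalar_sub1 a : 0 * a = 0 -> 0 * (a - 1) = 0.
Proof. intros Ha. exact (scalarD _ _ Ha (scalarN _ mul01)). Qed.

Lemma mulN1N1 : (- (1)) * (- (1)) = 1 * 1.
Proof.
  rewrite (scalar_mulrN (- (1)) 1 (scalarN _ mul01)), (mulC (- (1)) 1).
  now rewrite (scalar_mulrN 1 1 mul01), opprK.
Qed.

Lemma mulN1_subr1 x : 0 * x = 0 -> (- (1)) * (x - 1) = - (1 * x) + 1 * 1.
Proof.
  intros Hx.
  rewrite (scalar_mulrD (- (1)) x (- (1)) (scalarN _ mul01)), (mulC (- (1)) x).
  now rewrite (scalar_mulrN x 1 Hx), (mulC x 1), mulN1N1.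
Qed.

Lemma mulrDl_wheel a b w : (a + b) * w = a * w + b * w - 0 * w.
Proof.
  rewrite (mulC (a + b)), (mulC a), (mulC b), (mulC 0), <- wheel_distr.
  now rewrite <- addA, addrN, addr0.
Qed.

Lemma mulA_scalar a b y : 0 * a = 0 -> 0 * b = 0 ->
  a * (b * y) = (a * b) * y - ((a - 1) * (b - 1)) * (0 * y).
Proof. intros Ha Hb. apply s_assoc; apply scalar_inS0; assumption. Qed.

Lemma scalar_mulCA a b y : 0 * a = 0 -> 0 * b = 0 -> a * (b * y) = b * (a * y).
Proof.
  intros Ha Hb.
  now rewrite (mulA_scalar a b y Ha Hb), (mulA_scalar b a y Hb Ha), (mulC a b),
    (mulC (a - 1)).
Qed.

Lemma one_mul_zero_mul_eq y : 1 * (0 * y) = 0 * y - 0 * (0 * y).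
Proof.
  pose proof (mulA_scalar 1 0 y mul01 mul00) as H.
  now rewrite (mulC 1 0), mul01, addrN, add0r, (scalarN 1 mul01) in H.
Qed.

Lemma mul11_zero_mul_eq y : (1 * 1) * (0 * y) = 0 * y - 0 * (0 * y).
Proof.
  pose proof (mulA_scalar 0 0 y mul00 mul00) as H.
  rewrite mul00, add0r, mulN1N1 in H.
  exact (subr_swap _ _ _ H).
Qed.

Variable e : T.
Hypothesis mul_e : forall s, e * s = s.

Lemma zero_mul_e : 0 * e = 0.
Proof. now rewrite mulC, mul_e. Qed.

(* S-associativity at [(0, e, y)] shows that [-1 + 1 * 1] kills [0 * y], and
   at [(1, 0, y)], [(0, 0, y)] that [1] and [1 * 1] act alike on it; so the
   wheel expansions of [(-1 + 1 * 1) * (0 * y) = 0] and of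
   [(-1 + 1) * (0 * y) = 0 * (0 * y)] coincide. *)
Lemma zero_mul_zero_mul y : 0 * (0 * y) = 0.
Proof.
  assert (Hkill : (- (1) + 1 * 1) * (0 * y) = 0).
  { pose proof (mulA_scalar 0 e y mul00 zero_mul_e) as H.
    rewrite mul_e, zero_mul_e, add0r, (mulN1_subr1 e zero_mul_e), (mulC 1 e),
      mul_e in H.
    now rewrite (subr_swap _ _ _ H), addrN. }
  assert (H11 : (1 * 1) * (0 * y) = 1 * (0 * y)).
  { now rewrite mul11_zero_mul_eq, one_mul_zero_mul_eq. }
  pose proof (mulrDl_wheel (- (1)) 1 (0 * y)) as Hdefect.
  rewrite addNr in Hdefect.
  now rewrite Hdefect, <- H11, <- mulrDl_wheel, Hkill.
Qed.

Lemma one_mul_zero_mul y : 1 * (0 * y) = 0 * y.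
Proof. now rewrite one_mul_zero_mul_eq, zero_mul_zero_mul, oppr0, addr0. Qed.

Lemma mul11_zero_mul y : (1 * 1) * (0 * y) = 0 * y.
Proof. now rewrite mul11_zero_mul_eq, zero_mul_zero_mul, oppr0, addr0. Qed.

Lemma mulrDl_zero_mul a b y : (a + b) * (0 * y) = a * (0 * y) + b * (0 * y).
Proof. now rewrite mulrDl_wheel, zero_mul_zero_mul, oppr0, addr0. Qed.

Lemma mulrNl_zero_mul a y : (- a) * (0 * y) = - (a * (0 * y)).
Proof.
  apply oppr_unique.
  now rewrite <- mulrDl_zero_mul, addrN, zero_mul_zero_mul.
Qed.

Lemma zero_mul_scalar_mul x y : 0 * x = 0 -> 0 * (x * y) = (1 * x) * (0 * y).
Proof.
  intros Hx.
  rewrite (mulA_scalar 0 x y mul00 Hx), Hx, add0r, (mulN1_subr1 x Hx).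
  rewrite mulrDl_zero_mul, mulrNl_zero_mul, mul11_zero_mul, opprD, opprK.
  now rewrite addC, subrK.
Qed.

Hypothesis one_mul_scalar : forall y, inS S 0 y <-> exists x, inS S 0 x /\ y = 1 * x.

Lemma scalar_one_mul x : 0 * x = 0 -> 0 * (1 * x) = 0.
Proof.
  intros Hx. apply one_mul_scalar. exists x.
  split; [exact (scalar_inS0 x Hx) | reflexivity].
Qed.

Lemma scalar_mul a b : 0 * a = 0 -> 0 * b = 0 -> 0 * (a * b) = 0.
Proof.
  intros Ha Hb.
  now rewrite (zero_mul_scalar_mul a b Ha), Hb, mulC, (scalar_one_mul a Ha).
Qed.

Lemma scalar_mulA a b c : 0 * a = 0 -> 0 * b = 0 -> 0 * c = 0 ->
  a * (b * c) = (a * b) * c.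
Proof.
  intros Ha Hb Hc.
  rewrite (mulA_scalar a b c Ha Hb), Hc, (mulC _ 0),
    (scalar_mul _ _ (scalar_sub1 a Ha) (scalar_sub1 b Hb)).
  now rewrite oppr0, addr0.
Qed.

Section ScalarInverse.

Variables i m : T.
Hypothesis scalar_i : 0 * i = 0.
Hypothesis scalar_m : 0 * m = 0.
Hypothesis mul_im : i * m = e.

Lemma scalar_mul_decomp z : z = i * (m * z) + ((i - 1) * (m - 1)) * (0 * z).
Proof. now rewrite (mulA_scalar i m z scalar_i scalar_m), mul_im, mul_e, subrK. Qed.

Lemma zero_mul_scalar_inv z : 0 * z = i * (0 * (m * z)).
Proof.
  assert (Hi1m : i * (1 * m) = 1).
  { rewrite (scalar_mulA i 1 m scalar_i mul01 scalar_m), (mulC i 1),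
      <- (scalar_mulA 1 i m mul01 scalar_i scalar_m), mul_im.
    now rewrite mulC, mul_e. }
  rewrite (zero_mul_scalar_mul m z scalar_m),
    (scalar_mulA i (1 * m) (0 * z) scalar_i (scalar_one_mul m scalar_m)
       (zero_mul_zero_mul z)).
  now rewrite Hi1m, one_mul_zero_mul.
Qed.

Lemma scalar_mul_inj x y : m * x = m * y -> x = y.
Proof.
  intros Hxy.
  assert (H0 : 0 * x = 0 * y).
  { now rewrite (zero_mul_scalar_inv x), (zero_mul_scalar_inv y), Hxy. }
  now rewrite (scalar_mul_decomp x), (scalar_mul_decomp y), Hxy, H0.
Qed.

End ScalarInverse.

End SStructure.

Theorem proposition4p1p5 (S : sops) (HS : is_SField S) (s m n q q' : car S) :
  inS S (szero S) m -> inS S (szero S) n -> m <> szero S ->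
  IsDivScalar S s m q ->
  IsDivScalar S (smul S n s) m q' ->
  smul S n q = q'.
Proof.
  intros [Hm _] [Hn _] Hm0 [Hs _] [Hns _].
  destruct HS as [[[[addA [addC [addr0 [addrN _]]]]
    [mulC [wheel [sassoc [_ [_ [[H00 _] [[H01 _] H1S0]]]]]]]] _] [e [[_ He] Hinv]]].
  destruct (Hinv m (scalar_inS0 S mulC m Hm) Hm0) as [i [[Hi _] [Him _]]].
  apply (scalar_mul_inj S addA addC addr0 addrN mulC wheel sassoc H00 H01 e
           (fun t => proj1 (He t)) H1S0 i m Hi Hm (eq_trans (mulC i m) Him)).
  rewrite <- Hns, Hs.
  exact (scalar_mulCA S mulC sassoc m n q Hm Hn).
Qed.
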